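(* In the setting described in the context, let $p$ be a facet of $\Delta_\lambda$ of $\mathbf a$-degree at least $1$. Then the simplicial complex $F_{<p}\cap p$ has dimension $\dim\Delta_\lambda-1=|\lambda|-3$.
   Context: Let $n,d\ge2$, $V(n,d)=\{\mathbf b\in\mathbb N^n:\sum_i b_i=d\}$, and let $\mathbf a\in V(n,d)$ satisfy $a_1\le a_2\le\dots\le a_n$ and $\mathbf a\notin\{(0,\dots,0,d),(0,\dots,0,1,d-1),(0,\dots,0,2,d-2)\}$. Let $\Gamma=V(n,d)\setminus\{\mathbf a\}$ and assume $\Gamma+\Gamma=V(n,2d)$. Order $V(n,d)$ lexicographically ($b<c$ iff the first nonzero coordinate of $c-b$ is positive). Let $\lambda$ be in the semigroup generated by $\Gamma$, and $|\lambda|=(\sum_i\lambda_i)/d=:k$. A closed chain from $0$ to $\lambda$ with links in $V(n,d)$ is a sequence $0=v_0,v_1,\dots,v_k=\lambda$ in $\mathbb N^n$ with $v_j-v_{j-1}\in V(n,d)$ for all $j$; its links are $v_j-v_{j-1}$ and its $\mathbf a$-degree is the number of links equal to $\mathbf a$; its open chain is the set $\{v_1,\dots,v_{k-1}\}$. $\Delta_\lambda$ is the simplicial complex on $\mathbb N^n$ whose facets are the open chains of all such closed chains (it is pure of dimension $|\lambda|-2$); $\Gamma_\lambda$ is the subcomplex generated by the open chains of closed chains all of whose links lie in $\Gamma$. Facets are ordered: $q<p$ iff the $\mathbf a$-degree of $q$ is smaller than that of $p$, or they are equal and the sequence of links of $q$ is lexicographically smaller than that of $p$ (comparing first links first, using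 the order on $V(n,d)$). For a facet $p$, $F_{<p}$ is the subcomplex of $\Delta_\lambda$ generated by all facets $q<p$, and $p$ also denotes the full simplex on its vertex set. *)

From mathcomp Require Import all_boot all_order all_algebra.
Set Implicit Arguments. Unset Strict Implicit. Unset Printing Implicit Defensive.

Definition vec (n : nat) := {ffun 'I_n -> nat}.

Definition vdeg n (b : vec n) : nat := \sum_(i < n) b i.

Definition inV n d (b : vec n) : bool := vdeg b == d.

Definition vadd n (b c : vec n) : vec n := [ffun i => b i + c i].

Definition vsum n (s : seq (vec n)) : vec n := [ffun i => \sum_(x <- s) x i].

Definition lexlt n (b c : vec n) : bool :=
  [exists i : 'I_n, [forall j : 'I_n, (j < i)%N ==> (b j == c j)] && (b i < c i)%N].

Fixpoint seqlt n (s t : seq (vec n)) : bool :=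
  match s, t with
  | x :: s', y :: t' => lexlt x y || ((x == y) && seqlt s' t')
  | _, _ => false
  end.

(* a closed chain from 0 to lam with links in V(n,d), given by its sequence
   of links v_1 - v_0, ..., v_k - v_{k-1} *)
Definition closed_chain n d (lam : vec n) (s : seq (vec n)) : bool :=
  all (@inV n d) s && (vsum s == lam).

Definition adeg n (a : vec n) (s : seq (vec n)) : nat := count_mem a s.

(* the open chain {v_1, ..., v_{k-1}} (v_j = sum of the first j links) *)
Definition open_chain n (s : seq (vec n)) : seq (vec n) :=
  [seq vsum (take j s) | j <- iota 1 (size s).-1].

Definition facet_lt n (a : vec n) (q p : seq (vec n)) : bool :=
  (adeg a q < adeg a p)%N || ((adeg a q == adeg a p) && seqlt q p).

Definition face_Flt_cap n d (a lam : vec n) (p : seq (vec n)) (sigma : seq (vec n)) : Prop :=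
  {subset sigma <= open_chain p} /\
  exists q, closed_chain d lam q /\ facet_lt a q p /\ {subset sigma <= open_chain q}.

(* a simplicial complex (given by its faces, as duplicate-free vertex lists)
   has dimension m: maximal face has m+1 vertices *)
Definition has_dim (T : eqType) (K : seq T -> Prop) (m : int) : Prop :=
  (exists sigma, uniq sigma /\ K sigma /\ ((size sigma)%:Z = m + 1)%R) /\
  (forall sigma, uniq sigma -> K sigma -> ((size sigma)%:Z <= m + 1)%R).

Definition excl_vec n (c d : nat) : vec n :=
  [ffun i : 'I_n => if val i == n.-1 then d - c
                    else if val i == n.-2 then c else 0].

From mathcomp Require Import all_boot all_order all_algebra zify.
Set Implicit Arguments. Unset Strict Implicit. Unset Printing Implicit Defensive.

(* A vertex [v_j] of a chain has degree [j d], so a chain is determined by its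
   open chain; hence [p] itself is not a face of an earlier facet and
   [F_{<p} \cap p] has dimension at most [|lam| - 3].  Conversely, [a] occurs
   next to some link [y] of [p]; writing [a + y = x1 + x2] with [x1, x2] in
   [Gamma] and exchanging the two links gives a facet of smaller [a]-degree
   sharing every vertex of [p] but the one between them. *)

Lemma adjacent_pair_mem (T : eqType) (x : T) (s : seq T) :
  x \in s -> 1 < size s ->
  exists s1 y1 y2 s2, s = s1 ++ [:: y1, y2 & s2] /\ x \in [:: y1; y2].
Proof.
case/splitPr => s1 [|y s2]; last by exists s1, x, y, s2; rewrite !inE eqxx.
case/lastP: s1 => [|s1 y] // _.
by exists s1, y, x, [::]; rewrite cat_rcons !inE eqxx orbT.
Qed.

Section Chains.
Variable n : nat.
Implicit Types (x y : vec n) (s t : seq (vec n)).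

Lemma vsum_nil : vsum [::] = [ffun _ => 0] :> vec n.
Proof. by apply/ffunP => i; rewrite !ffunE big_nil. Qed.

Lemma vsum_cons x s : vsum (x :: s) = vadd x (vsum s).
Proof. by apply/ffunP => i; rewrite !ffunE big_cons. Qed.

Lemma vsum_cat s t : vsum (s ++ t) = vadd (vsum s) (vsum t).
Proof. by apply/ffunP => i; rewrite !ffunE big_cat. Qed.

Lemma vsum_seq1 x : vsum [:: x] = x.
Proof. by apply/ffunP => i; rewrite vsum_cons vsum_nil !ffunE addn0. Qed.

Lemma vsum_cons2 x1 x2 s : vsum [:: x1, x2 & s] = vadd (vadd x1 x2) (vsum s).
Proof. by apply/ffunP => i; rewrite !vsum_cons !ffunE addnA. Qed.

Lemma vdeg_vadd x y : vdeg (vadd x y) = vdeg x + vdeg y.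
Proof. by rewrite /vdeg -big_split; apply: eq_bigr => i _; rewrite ffunE. Qed.

Lemma vdeg_vsum d s : all (@inV n d) s -> vdeg (vsum s) = size s * d.
Proof.
elim: s => [|x s IHs] /=.
  by rewrite vsum_nil /vdeg big1 // => i _; rewrite ffunE.
by case/andP => /eqP dx /IHs ds; rewrite vsum_cons vdeg_vadd ds dx mulSn.
Qed.

Lemma vdeg_vsum_take d s j :
  all (@inV n d) s -> j <= size s -> vdeg (vsum (take j s)) = j * d.
Proof.
move=> sd le_js; rewrite (@vdeg_vsum d) ?size_takel //.
by move: sd; rewrite -{1}(cat_take_drop j s) all_cat => /andP[].
Qed.

Lemma closed_chain_size d lam s :
  0 < d -> closed_chain d lam s -> size s = vdeg lam %/ d.
Proof. by move=> d0 /andP[sd /eqP <-]; rewrite (vdeg_vsum sd) mulnK. Qed.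

Lemma closed_chain_size1 d lam s : closed_chain d lam s -> size s = 1 -> s = [:: lam].
Proof. by case: s => [|x []] //= /andP[_ /eqP]; rewrite vsum_seq1 => ->. Qed.

Lemma eq_from_vsum_take s t :
  size s = size t -> (forall j, vsum (take j s) = vsum (take j t)) -> s = t.
Proof.
elim: s t => [|x s IHs] [|y t] //= [eq_st] eq_pre.
have exy : x = y by have := eq_pre 1; rewrite /= !take0 !vsum_seq1.
subst y; congr cons; apply: IHs => // j; apply/ffunP => i.
have /ffunP/(_ i) := eq_pre j.+1.
by rewrite /= !vsum_cons !ffunE => /addnI.
Qed.

Lemma size_open_chain s : size (open_chain s) = (size s).-1.
Proof. by rewrite size_map size_iota. Qed.

Lemma mem_open_chain s j :
  0 < j < size s -> vsum (take j s) \in open_chain s.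
Proof. by move=> j_in; apply: map_f; rewrite mem_iota; lia. Qed.

Lemma open_chainP s x :
  x \in open_chain s -> exists2 j, 0 < j < size s & x = vsum (take j s).
Proof. by case/mapP => j; rewrite mem_iota => j_in ->; exists j => //; lia. Qed.

Lemma open_chain_uniq d s : 0 < d -> all (@inV n d) s -> uniq (open_chain s).
Proof.
move=> d0 sd; rewrite map_inj_in_uniq ?iota_uniq // => i j.
have le_size k : k \in iota 1 (size s).-1 -> k <= size s by rewrite mem_iota; lia.
move=> /le_size le_is /le_size le_js /(congr1 (@vdeg n)).
by rewrite !(vdeg_vsum_take sd) // => /eqP; rewrite eqn_pmul2r // => /eqP.
Qed.

Lemma chain_eq_of_open_chain_sub d s t :
  0 < d -> all (@inV n d) s -> all (@inV n d) t ->
  size s = size t -> vsum s = vsum t ->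
  {subset open_chain s <= open_chain t} -> s = t.
Proof.
move=> d0 sd td eq_st sum_st sub_st; apply: eq_from_vsum_take => // j.
have [-> | j0] := posnP j; first by rewrite !take0.
have [lt_js | le_sj] := ltnP j (size s); last by rewrite !take_oversize -?eq_st.
have j_in : 0 < j < size s by rewrite j0 lt_js.
have [j' j'_in E] := open_chainP (sub_st _ (mem_open_chain j_in)).
rewrite E; congr (vsum (take _ _)); apply/eqP; rewrite -(eqn_pmul2r d0).
rewrite -(vdeg_vsum_take sd (ltnW lt_js)) E (vdeg_vsum_take td) ?eqxx //; lia.
Qed.

Lemma vsum_take_exchange s1 s2 x1 x2 y1 y2 j :
  vadd x1 x2 = vadd y1 y2 -> j != (size s1).+1 ->
  vsum (take j (s1 ++ [:: x1, x2 & s2])) = vsum (take j (s1 ++ [:: y1, y2 & s2])).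
Proof.
move=> exy j_mid; rewrite !take_cat; case: ltnP => // le_s1j.
rewrite !vsum_cat; congr vadd.
case def_j: (j - size s1) => [|[|m]] //=; last by rewrite !vsum_cons2 exy.
by move/eqP: j_mid; lia.
Qed.

Lemma lexltxx x : lexlt x x = false.
Proof. by apply/existsP => -[i /andP[_]]; rewrite ltnn. Qed.

Lemma seqltxx s : seqlt s s = false.
Proof. by elim: s => //= x s ->; rewrite lexltxx eqxx. Qed.

Lemma facet_ltxx a s : facet_lt a s s = false.
Proof. by rewrite /facet_lt ltnn seqltxx andbF. Qed.

End Chains.

Lemma face_Flt_cap_size n d (a lam : vec n) p sigma :
  0 < d -> closed_chain d lam p -> uniq sigma -> face_Flt_cap d a lam p sigma ->
  size sigma <= (size p).-2.
Proof.
move=> d0 p_chain sigma_uniq [sub_p [q [q_chain [lt_qp sub_q]]]].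
rewrite leqNgt; apply/negP => big_sigma.
have [_ eq_sigma] : (size sigma = size (open_chain p)) * (sigma =i open_chain p).
  by apply: uniq_min_size => //; rewrite size_open_chain; lia.
have eq_pq : p = q.
  have size_pq : size p = size q.
    by rewrite (closed_chain_size d0 p_chain) (closed_chain_size d0 q_chain).
  case/andP: p_chain => pd /eqP sum_p; case/andP: q_chain => qd /eqP sum_q.
  apply: (chain_eq_of_open_chain_sub d0 pd qd size_pq); first by rewrite sum_p sum_q.
  by move=> x; rewrite -eq_sigma => /sub_q.
by move: lt_qp; rewrite -eq_pq facet_ltxx.
Qed.

Lemma face_Flt_cap_exists n d (a lam : vec n) p :
  0 < d ->
  (forall c, inV (2 * d) c ->
     exists x y, [/\ inV d x, x != a, inV d y, y != a & c = vadd x y]) ->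
  closed_chain d lam p -> a \in p -> 1 < size p ->
  exists sigma, [/\ uniq sigma, face_Flt_cap d a lam p sigma & size sigma = (size p).-2].
Proof.
move=> d0 split2 /andP[pd /eqP sum_p] a_p p2.
have [s1 [y1 [y2 [s2 [def_p a_y]]]]] := adjacent_pair_mem a_p p2.
have y12d : inV (2 * d) (vadd y1 y2).
  move: pd; rewrite def_p all_cat /= => /and3P[_ /eqP d1 /andP[/eqP d2 _]].
  by rewrite /inV vdeg_vadd d1 d2 mul2n addnn.
have [x1 [x2 [x1d x1a x2d x2a exy]]] := split2 _ y12d.
pose q := s1 ++ [:: x1, x2 & s2].
pose v := vsum (take (size s1).+1 p).
have size_q : size q = size p by rewrite def_p !size_cat.
have oc_uniq := open_chain_uniq d0 pd.
have v_p : v \in open_chain p.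
  by apply: mem_open_chain; rewrite def_p size_cat /= addnS ltnS -addn1 leq_add2l.
exists (rem v (open_chain p)); split; first exact: rem_uniq; last first.
  by rewrite size_rem // size_open_chain.
split=> [x /mem_rem // | ]; exists q; split; last split.
- rewrite /closed_chain -sum_p def_p !vsum_cat !vsum_cons2 exy eqxx andbT.
  by move: pd; rewrite def_p !all_cat /= x1d x2d => /and3P[-> _ /andP[_ ->]].
- apply/orP; left; rewrite /adeg def_p !count_cat /= (negbTE x1a) (negbTE x2a).
  by move: a_y; rewrite !inE => /orP[] /eqP <-; rewrite eqxx; lia.
move=> x; rewrite (mem_rem_uniq _ oc_uniq) inE => /andP[x_v /open_chainP[j j_in def_x]].
have j_mid : j != (size s1).+1 by apply: contraNneq x_v => def_j; rewrite def_x def_j.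
rewrite def_x def_p (vsum_take_exchange _ exy j_mid); apply: mem_open_chain.
by rewrite size_q.
Qed.

Theorem lemma3p1 (n d : nat) (a lam : vec n) (p : seq (vec n)) :
  (2 <= n)%N -> (2 <= d)%N ->
  inV d a ->
  (forall i j : 'I_n, (i <= j)%N -> (a i <= a j)%N) ->
  a != excl_vec n 0 d -> a != excl_vec n 1 d -> a != excl_vec n 2 d ->
  (* Gamma + Gamma = V(n,2d), with Gamma = V(n,d) \ {a} *)
  (forall c : vec n, inV (2 * d) c <->
     exists x y : vec n, [/\ inV d x, x != a, inV d y, y != a & c = vadd x y]) ->
  (* lam in the semigroup generated by Gamma *)
  (exists s : seq (vec n),
     [/\ (0 < size s)%N, all (fun b => inV d b && (b != a)) s & vsum s = lam]) ->
  (* p is a facet of Delta_lam (given by its closed chain) of a-degree >= 1 *)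
  closed_chain d lam p -> (1 <= adeg a p)%N ->
  has_dim (face_Flt_cap d a lam p) (((vdeg lam %/ d)%N)%:Z - 3)%R.
Proof.
(* The conditions on [a] only serve to make [Gamma + Gamma = V(n,2d)] possible,
   and that is assumed outright. *)
move=> _ d2 _ _ _ _ _ Gamma2 [s [s0 s_Gamma sum_s]] p_chain adeg_p.
have d0 : 0 < d by lia.
have a_p : a \in p by rewrite -has_pred1 has_count.
have s_chain : closed_chain d lam s.
  by rewrite /closed_chain sum_s eqxx andbT; apply/allP => x /(allP s_Gamma) /andP[].
have size_sp : size s = size p.
  by rewrite (closed_chain_size d0 s_chain) (closed_chain_size d0 p_chain).
have p2 : 1 < size p.
  have p0 : 0 < size p by apply: leq_trans adeg_p (count_size _ _).
  rewrite ltn_neqAle p0 andbT; apply/eqP => /esym p1.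
  move: a_p s_Gamma; rewrite (closed_chain_size1 p_chain p1).
  rewrite (closed_chain_size1 s_chain) ?size_sp //= inE andbT.
  by move=> /eqP ->; rewrite eqxx andbF.
rewrite -(closed_chain_size d0 p_chain); split.
  have [sigma [sigma_uniq sigma_face size_sigma]] :=
    face_Flt_cap_exists d0 (fun c => (Gamma2 c).1) p_chain a_p p2.
  by exists sigma; split=> //; split=> //; rewrite size_sigma; lia.
move=> sigma sigma_uniq sigma_face.
by have := face_Flt_cap_size d0 p_chain sigma_uniq sigma_face; lia.
Qed.
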